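(* Let $n\ge2$, $0<r<n$, and $E_1\ge E_2\ge\dots\ge E_n>0$. For a set $\mathcal{A}=\{a_1<a_2<\dots<a_r\}\subseteq[1:n]$ of size $r$, let (P-$\mathcal{A}$) be the linear program $$\max_{\mathbf{p}\in\mathcal{I},\,\gamma\in\mathbb{R}}\ \sum_{j=1}^np_jE_j-\frac12\sum_{j\in\mathcal{A}}p_jE_j\quad\text{s.t. } p_aE_a\ge\gamma\ \forall a\in\mathcal{A},\quad \gamma\ge p_tE_t\ \forall t\in[1:n]\setminus\mathcal{A}.$$ Then the optimal value of (P-$\{1,2,\dots,r\}$) is at least the optimal value of (P-$\mathcal{A}$) for every such $\mathcal{A}$.
   Context: $\mathcal{I}=\{\mathbf{p}\in[0,1]^n:\sum_kp_k=r\}$; $[1:n]=\{1,\dots,n\}$. (For $m=2$, maximizing $f^{\mathrm{worst}}(\mathbf{p})=\sum_kp_kE_k-\frac12(\text{sum of the }r\text{ largest }p_kE_k)$ over $\mathcal{I}$ is the best of the programs (P-$\mathcal{A}$).) *)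

From HB Require Import structures.
From mathcomp Require Import all_boot all_order all_algebra.
From mathcomp Require Import classical_sets reals.
Set Implicit Arguments. Unset Strict Implicit. Unset Printing Implicit Defensive.
Import Order.TTheory GRing.Theory Num.Theory.
Local Open Scope ring_scope.
Local Open Scope classical_set_scope.

(* Indices [1:n] are represented by 'I_n (0-based: index i stands for i+1). *)

Definition in_I (R : realType) (n r : nat) (p : 'I_n -> R) : Prop :=
  (forall k, 0 <= p k <= 1) /\ \sum_(k < n) p k = r%:R.

Definition PA_feasible (R : realType) (n r : nat) (E : 'I_n -> R)
    (A : {set 'I_n}) (p : 'I_n -> R) (gamma : R) : Prop :=
  [/\ in_I r p,
      (forall a, a \in A -> gamma <= p a * E a) &
      (forall t, t \notin A -> p t * E t <= gamma)].

Definition PA_obj (R : realType) (n : nat) (E : 'I_n -> R)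
    (A : {set 'I_n}) (p : 'I_n -> R) : R :=
  \sum_(j < n) p j * E j - 2^-1 * \sum_(j in A) p j * E j.

(* Optimal value of (P-A): supremum of the objective over the feasible set
   (the maximum is attained, the feasible set being nonempty and compact). *)
Definition PA_value (R : realType) (n r : nat) (E : 'I_n -> R)
    (A : {set 'I_n}) : R :=
  sup [set PA_obj E A p | p in [set p | exists gamma, PA_feasible r E A p gamma]].

Definition top_set (n r : nat) : {set 'I_n} := [set i : 'I_n | (i < r)%N].

From HB Require Import structures.
From mathcomp Require Import all_boot all_order all_algebra.
From mathcomp Require Import classical_sets reals.
From mathcomp Require Import lra.
Set Implicit Arguments. Unset Strict Implicit. Unset Printing Implicit Defensive.
Import Order.TTheory GRing.Theory Num.Theory.
Local Open Scope ring_scope.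

(* Exchange argument.  Let (p, gamma) be feasible for (P-A) with A different
   from {1, ..., r}: some a in A lies beyond r and some i <= r is missing
   from A, so E_i >= E_a.  Move i into the set and a out of it, keeping gamma
   and the total mass p_a + p_i, and give a the new mass
   max (p_a + p_i - 1, p_i E_i / E_a): the products p_a E_a and p_i E_i then
   trade places up to a nonnegative surplus, which only raises the objective.
   Each exchange shrinks A \ {1, ..., r}, so every objective value of (P-A)
   is dominated by one of (P-{1, ..., r}). *)

Lemma exchange_masses (R : realFieldType) (e f g u w : R) :
  0 < e -> e <= f -> 0 <= u <= 1 -> 0 <= w <= 1 -> w * f <= g -> g <= u * e ->
  let x := Num.max (u + w - 1) (w * f / e) in
  [/\ 0 <= x <= 1, 0 <= u + w - x <= 1, x * e <= g, g <= (u + w - x) * f &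
      2^-1 * (u * e) + w * f <= x * e + 2^-1 * ((u + w - x) * f)].
Proof.
move=> e0 ef /andP[u0 u1] /andP[w0 w1] wg gu x.
have f0 : 0 < f by apply: lt_le_trans ef.
set x0 := w * f / e.
have x0e : x0 * e = w * f by rewrite /x0 divfK ?gt_eqF.
have x0_ge0 : 0 <= x0 by rewrite /x0 divr_ge0 ?mulr_ge0 // ltW.
have x0u : x0 <= u by rewrite -(ler_pM2r e0) x0e (le_trans wg gu).
(* the surplus (u + w - x0) f - u e equals (f - e) (u e - w f) / e *)
have surplus : u * e <= (u + w - x0) * f.
  rewrite -(ler_pM2l e0); have : 0 <= (f - e) * (u * e - w * f).
    by apply: mulr_ge0; lra.
  nra.
have [x0_lt|x0_ge] := ltP x0 (u + w - 1).
- have ue_le_e : u * e <= e := ler_piMl (ltW e0) u1.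
  have we_le_wf : w * e <= w * f := ler_wpM2l w0 ef.
  have x0e_le : x0 * e <= (u + w - 1) * e by rewrite ler_pM2r // ltW.
  by rewrite /x max_l ?(ltW x0_lt) //; split; lra.
- by rewrite /x -/x0 max_r //; split; lra.
Qed.

Lemma sumr_eq_off_pair (I : finType) (V : zmodType) (F G : I -> V) (a i : I) :
  a != i -> (forall j, j != a -> j != i -> F j = G j) ->
  \sum_j F j - (F a + F i) = \sum_j G j - (G a + G i).
Proof.
move=> ai FG.
have split2 (H : I -> V) :
    \sum_j H j = H a + H i + \sum_(j | (j != a) && (j != i)) H j.
  by rewrite (bigD1 a) //= (bigD1 i) 1?eq_sym //= addrA.
rewrite (split2 F) (split2 G) [LHS]addrC [RHS]addrC !addKr.
by apply: eq_bigr => j /andP[]; apply: FG.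
Qed.

Lemma card_top_set (n r : nat) : (r <= n)%N -> #|top_set n r| = r.
Proof.
move=> rn; rewrite -sum1_card (eq_bigl (fun i : 'I_n => i < r)%N) => [|i].
  by rewrite (big_ord_narrow rn) sum1_card card_ord.
by rewrite inE.
Qed.

Section ExchangeArgument.
Variables (R : realType) (n r : nat) (E : 'I_n -> R).
Hypothesis E_pos : forall i : 'I_n, 0 < E i.
Hypothesis E_mono : forall i j : 'I_n, (i <= j)%N -> E j <= E i.

Definition PA_weight (A : {set 'I_n}) (j : 'I_n) : R :=
  if j \in A then 2^-1 else 1.

Lemma PA_objE (A : {set 'I_n}) (p : 'I_n -> R) :
  PA_obj E A p = \sum_j PA_weight A j * (p j * E j).
Proof.
rewrite /PA_obj mulr_sumr [X in _ - X]big_mkcond /= -sumrB.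
by apply: eq_bigr => j _; rewrite /PA_weight; case: (j \in A); lra.
Qed.

Lemma PA_obj_le_sumE (A : {set 'I_n}) p g :
  PA_feasible r E A p g -> PA_obj E A p <= \sum_j E j.
Proof.
case=> [[p01 _] _ _]; rewrite PA_objE; apply: ler_sum => j _.
have := E_pos j; have /andP[] := p01 j; rewrite /PA_weight.
by case: (j \in A); nra.
Qed.

Lemma PA_feasible_indicator (A : {set 'I_n}) :
  #|A| = r -> PA_feasible r E A (fun k => (k \in A)%:R) 0.
Proof.
move=> cardA; split; first split.
- by move=> k; case: (k \in A); rewrite ?lexx ler01.
- rewrite -cardA -sum1_card natr_sum [RHS]big_mkcond.
  by apply: eq_bigr => k _; case: (k \in A).
- by move=> a ->; rewrite mul1r ltW.
- by move=> t /negbTE ->; rewrite mul0r.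
Qed.

Lemma PA_feasible_exchange (A : {set 'I_n}) (a i : 'I_n) p g :
  a \in A -> i \notin A -> (i <= a)%N -> PA_feasible r E A p g ->
  exists2 q, PA_feasible r E (i |: (A :\ a)) q g &
             PA_obj E A p <= PA_obj E (i |: (A :\ a)) q.
Proof.
move=> aA iA ia [[p01 sum_p] geA leA].
have ai : a != i by apply: contraNneq iA => <-.
have [] := exchange_masses (E_pos a) (E_mono ia) (p01 a) (p01 i)
                           (leA i iA) (geA a aA).
set x := Num.max _ _ => x01 y01 xg gy obj.
pose q j := if j == a then x else if j == i then p a + p i - x else p j.
have qa : q a = x by rewrite /q eqxx.
have qi : q i = p a + p i - x by rewrite /q eq_sym (negbTE ai) eqxx.
have q_off j : j != a -> j != i -> q j = p j.
  by move=> ja ji; rewrite /q (negbTE ja) (negbTE ji).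
have inA' j : (j \in i |: (A :\ a)) = (j == i) || (j != a) && (j \in A).
  by rewrite !inE.
exists q; first split; first split.
- move=> k; have [->|ka] := eqVneq k a; first by rewrite qa.
  by have [->|ki] := eqVneq k i; [rewrite qi | rewrite q_off].
- have := sumr_eq_off_pair ai q_off; rewrite qa qi sum_p; lra.
- move=> j; rewrite inA'; have [->|ji] := eqVneq j i; first by rewrite qi.
  by case/andP=> ja jA; rewrite q_off //; apply: geA.
- move=> j; rewrite inA' negb_or negb_and negbK => /andP[ji].
  have [->|ja] := eqVneq j a; first by rewrite qa.
  by move=> jA; rewrite q_off //; apply: leA.
- rewrite !PA_objE.
  have off j : j != a -> j != i -> PA_weight (i |: (A :\ a)) j * (q j * E j) =
                                   PA_weight A j * (p j * E j).
    by move=> ja ji; rewrite /PA_weight inA' (negbTE ji) ja q_off.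
  have := sumr_eq_off_pair ai off.
  rewrite /PA_weight !inA' !eqxx (negbTE ai) aA (negbTE iA) /= qa qi.
  lra.
Qed.

Hypothesis r_le_n : (r <= n)%N.

Lemma PA_feasible_top_set (A : {set 'I_n}) : #|A| = r ->
  forall p g, PA_feasible r E A p g ->
  exists2 q, PA_feasible r E (top_set n r) q g &
             PA_obj E A p <= PA_obj E (top_set n r) q.
Proof.
set T := top_set n r; have cardT : #|T| = r := card_top_set r_le_n.
move=> cardA; move kE : #|A :\: T| => k.
elim: k A kE cardA => [|k IH] A kE cardA p g fp.
  have /eqP <- : A == T.
    by rewrite eqEcard -finset.setD_eq0 -cards_eq0 kE cardT cardA /=.
  by exists p.
have [a aAT] : exists a, a \in A :\: T by apply/set0Pn; rewrite -cards_eq0 kE.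
have [i iTA] : exists i, i \in T :\: A.
  apply/set0Pn; rewrite -cards_eq0.
  by rewrite cardsD cardT -cardA finset.setIC -cardsD kE.
move: (aAT) iTA; rewrite !inE -leqNgt => /andP[ra aA] /andP[iA ir].
have [q fq le_pq] := PA_feasible_exchange aA iA (ltnW (leq_trans ir ra)) fp.
have cardA' : #|i |: (A :\ a)| = r.
  by rewrite cardsU1 !inE negb_and iA orbT -cardA (cardsD1 a A) aA.
have kE' : #|(i |: (A :\ a)) :\: T| = k.
  have -> : (i |: (A :\ a)) :\: T = (A :\: T) :\ a.
    apply/setP => j; rewrite !inE.
    by have [->|ji] := eqVneq j i; [rewrite ir andbF | rewrite andbCA].
  by move: kE; rewrite (cardsD1 a) aAT => -[].
have [q' fq' le_qq'] := IH _ kE' cardA' q g fq.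
by exists q' => //; apply: le_trans le_qq'.
Qed.

End ExchangeArgument.

Theorem lemma9 (R : realType) (n r : nat) (E : 'I_n -> R)
  (hn : (2 <= n)%N) (hr0 : (0 < r)%N) (hrn : (r < n)%N)
  (hEmono : forall i j : 'I_n, (i <= j)%N -> E j <= E i)
  (hEpos : forall i : 'I_n, 0 < E i)
  (A : {set 'I_n}) (hA : #|A| = r) :
  PA_value r E A <= PA_value r E (top_set n r).
Proof.
rewrite /PA_value; set T := top_set n r; set ST := (X in _ <= sup X).
have ubT : has_ubound ST.
  by exists (\sum_j E j) => _ [p [g fp] <-]; apply: PA_obj_le_sumE fp.
apply: ge_sup => [|_ [p [g fp] <-]].
  exists (PA_obj E A (fun k => (k \in A)%:R)), (fun k => (k \in A)%:R) => //.
  by exists 0; apply: PA_feasible_indicator.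
have [q fq le_pq] := PA_feasible_top_set hEpos hEmono (ltnW hrn) hA fp.
by apply: le_trans le_pq (ub_le_sup ubT _); exists q => //; exists g.
Qed.
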